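(* Let $n\ge 5$. Suppose a group-testing measurement matrix $A$ for $\mathcal{G}^4_n$ distinguishes all binary vectors $x\in\{0,1\}^n$ having at most two ones, meaning that distinct such vectors give distinct outcome vectors. Then $A$ has at least $\lfloor n/4\rfloor$ rows.
   Context: $\mathcal{G}^4_n$ is the graph on $\{1,\dots,n\}$ in which each node $i$ is adjacent to $i\pm1$ and $i\pm2 \pmod n$. A group-testing measurement matrix for a graph $G$ on $\{1,\dots,n\}$ is a matrix $A\in\{0,1\}^{m\times n}$ in which every nonzero row has a support that induces a connected subgraph of $G$. Given $x\in\{0,1\}^n$, the outcome of row $i$ is the Boolean OR $\bigvee_{j:A_{ij}=1}x_j$. *)

From mathcomp Require Import all_boot all_order all_algebra.
Set Implicit Arguments. Unset Strict Implicit. Unset Printing Implicit Defensive.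

(* Vertices of G^4_n are 'I_n, i.e. 0..n-1 (node i+1 of the paper is i here). *)
Definition g4_adj (n : nat) : rel 'I_n :=
  fun i j => (i != j) &&
    [|| (j == (i + 1) %% n :> nat), (j == (i + 2) %% n :> nat),
        (i == (j + 1) %% n :> nat) | (i == (j + 2) %% n :> nat)].

Definition induces_connected (T : finType) (e : rel T) (S : {set T}) : Prop :=
  forall u v, u \in S -> v \in S ->
    connect [rel a b | [&& a \in S, b \in S & e a b]] u v.

Definition row_support (m n : nat) (A : 'M[bool]_(m, n)) (i : 'I_m) : {set 'I_n} :=
  [set j | A i j].

Definition gt_matrix (m n : nat) (e : rel 'I_n) (A : 'M[bool]_(m, n)) : Prop :=
  forall i : 'I_m, row_support A i != set0 -> induces_connected e (row_support A i).

Definition outcome (m n : nat) (A : 'M[bool]_(m, n)) (x : {ffun 'I_n -> bool})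
  : {ffun 'I_m -> bool} :=
  [ffun i => [exists j, A i j && x j]].

Definition weight (n : nat) (x : {ffun 'I_n -> bool}) : nat := #|[set j | x j]|.

From mathcomp Require Import all_boot all_order all_algebra.
From mathcomp Require Import zify.

(* We prove the stronger bound n <= 2m, from which n %/ 4 <= m follows.

   For every vertex j, the two weight-2 vectors supported on {j, j+1} and on
   {j+1, j+2} must be separated by some row k.  The support S of that row then
   avoids j+1 and contains exactly one of j and j+2: the window (j, j+1, j+2)
   is an "exit" (in, out, out) or an "entry" (out, out, in) of S.

   The key fact is that a connected S has at most one exit and one entry.
   Two distinct exits (or entries) yield two disjoint blocks of two
   consecutive vertices outside S.  Every edge of G^4_n joins vertices at
   cyclic distance at most 2, so no edge can jump over such a block, and a
   connected S lies in one of the two arcs between the blocks -- whereas the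
   two windows put vertices of S in both arcs.

   Hence j |-> (k, exit or entry) is injective from 'I_n into 'I_m * bool. *)

Set Implicit Arguments.
Unset Strict Implicit.
Unset Printing Implicit Defensive.

Lemma modn_addn_small n x k : x < n -> k <= n ->
  (x + k) %% n = if x + k < n then x + k else x + k - n.
Proof.
move=> xn kn; case: ltnP => h; first by rewrite modn_small.
by rewrite -{1}(subnK h) modnDr modn_small //; lia.
Qed.

(* The number of forward steps from p to x on the cycle Z/nZ; it turns the
   cycle into the segment [0, n) with p at position 0. *)
Definition offset (n p x : nat) : nat := (x + n - p) %% n.

Lemma offset_id n p : offset n p p = 0.
Proof. by rewrite /offset addKn modnn. Qed.

Lemma offset_shift n p x k : p <= n ->
  offset n p ((x + k) %% n) = (offset n p x + k) %% n.
Proof.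
move=> pn; rewrite /offset -!addnBA // !modnDml; congr (_ %% _); lia.
Qed.

Lemma offset_inj n p x y : p <= n -> x < n -> y < n ->
  offset n p x = offset n p y -> x = y.
Proof.
move=> pn xn yn; rewrite /offset -!addnBA // !modn_addn_small ?leq_subr //.
by case: ifP => /idP ?; case: ifP => /idP ?; lia.
Qed.

(* On the segment [0, n) with two blocks {s, s+1} and {t, t+1}, a step of
   length at most 2 (cyclically) between positions outside the blocks cannot
   cross a block: it stays inside or outside the open arc (s+1, t). *)
Lemma between_blocks_step n s t x k :
  s + 2 <= t -> t + 2 <= n -> x < n -> k <= 2 ->
  x \notin [:: s; s.+1; t; t.+1] -> (x + k) %% n \notin [:: s; s.+1; t; t.+1] ->
  (s.+1 < x < t) = (s.+1 < (x + k) %% n < t).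
Proof.
move=> st tn xn k2; rewrite modn_addn_small //; last lia.
rewrite !inE; case: ifP => wrap.
all: move=> /norP[/eqP ? /norP[/eqP ? /norP[/eqP ? /eqP ?]]]
  /norP[/eqP ? /norP[/eqP ? /norP[/eqP ? /eqP ?]]].
all: apply/idP/idP; lia.
Qed.

Lemma card_le_of_unique_witness (T U : finType) (R : T -> U -> Prop) :
  (forall x, exists y, R x y) -> (forall x x' y, R x y -> R x' y -> x = x') ->
  #|T| <= #|U|.
Proof.
move=> witness unique; have [f Rf] := fin_all_exists witness.
by apply: (leq_card f) => x x' fxx'; apply: (unique x x' (f x)); rewrite // fxx'.
Qed.

Section CirculantGraph.
Variable n : nat.
Implicit Types (S : {set 'I_n}) (c i j u v : 'I_n).

Definition succ i : 'I_n :=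
  Ordinal (ltn_pmod (i + 1) (leq_ltn_trans (leq0n i) (ltn_ord i))).

Lemma offset_lt c i : offset n c i < n.
Proof. exact: ltn_pmod (leq_ltn_trans (leq0n c) (ltn_ord c)). Qed.

Lemma offset_succ c i : offset n c (succ i) = (offset n c i + 1) %% n.
Proof. exact: offset_shift (ltnW (ltn_ord c)). Qed.

Lemma offset_window c i :
  offset n c (succ i) = (offset n c i + 1) %% n /\
  offset n c (succ (succ i)) = (offset n c i + 2) %% n.
Proof. by rewrite !offset_succ modnDml -addnA. Qed.

Lemma offset_ord_inj c i j : offset n c i = offset n c j -> i = j.
Proof.
move/offset_inj => eq_ij; apply/val_inj/eq_ij => //; exact: ltnW.
Qed.

Lemma offset_neq0 i j : i != j -> offset n i j != 0.
Proof.
by apply: contra_neq => off0; apply: (@offset_ord_inj i); rewrite off0 offset_id.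
Qed.

Lemma offset_separates S c i j : i \in S -> j \notin S ->
  offset n c i != offset n c j.
Proof.
by move=> iS; apply: contraNneq => /(@offset_ord_inj c) <-.
Qed.
Arguments offset_separates {S} c {i j}.

(* The arc lemma: if the blocks {a, a+1} and {b, b+1} avoid a connected S,
   then all of S lies on the same side of them, i.e. either inside or outside
   the arc strictly between the two blocks (measured from a base point c). *)
Lemma between_gaps S c a b :
  induces_connected (@g4_adj n) S ->
  a \notin S -> succ a \notin S -> b \notin S -> succ b \notin S ->
  offset n c a + 2 <= offset n c b -> offset n c b + 2 <= n ->
  {in S &, forall u v, ((offset n c a).+1 < offset n c u < offset n c b) =
                       ((offset n c a).+1 < offset n c v < offset n c b)}.
Proof.
move=> conn aS a'S bS b'S ab bn u v uS vS.
set s := offset n c a; set t := offset n c b.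
have off_a' : offset n c (succ a) = s.+1.
  by rewrite offset_succ modn_small ?addn1 //; lia.
have off_b' : offset n c (succ b) = t.+1.
  by rewrite offset_succ modn_small ?addn1 //; lia.
have off_out w : w \in S -> offset n c w \notin [:: s; s.+1; t; t.+1].
  move=> wS; have off_ne z : z \notin S -> (offset n c w == offset n c z) = false.
    by move=> zS; apply/negbTE/(offset_separates c wS zS).
  by rewrite !inE -off_a' -off_b' !off_ne.
pose inner := [pred w : 'I_n | s.+1 < offset n c w < t].
have step (x y : 'I_n) k : (y : nat) = (x + k) %% n -> k <= 2 ->
    x \in S -> y \in S -> (x \in inner) = (y \in inner).
  move=> yE k2 xS yS; rewrite !inE yE offset_shift ?(ltnW (ltn_ord c)) //.
  apply: between_blocks_step; rewrite ?off_out ?offset_lt //.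
  by rewrite -(@offset_shift n c x k) ?(ltnW (ltn_ord c)) // -yE off_out.
have closed_inner :
    closed [rel x y | [&& x \in S, y \in S & g4_adj x y]] inner.
  move=> x y /and3P[xS yS /andP[_ /or4P[]]] /eqP yE.
  - by apply: (step _ _ _ yE).
  - by apply: (step _ _ _ yE).
  - by symmetry; apply: (step _ _ _ yE).
  - by symmetry; apply: (step _ _ _ yE).
by have := closed_connect closed_inner (conn u v uS vS); rewrite !inE.
Qed.

Definition exit_at S j := [&& j \in S, succ j \notin S & succ (succ j) \notin S].

Definition entry_at S j := [&& j \notin S, succ j \notin S & succ (succ j) \in S].

Hypothesis n_gt2 : 2 < n.

Lemma offset_window_self j :
  offset n j (succ j) = 1 /\ offset n j (succ (succ j)) = 2.
Proof.
have [-> ->] := offset_window j j.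
by rewrite offset_id !add0n (modn_small n_gt2) (modn_small (ltnW n_gt2)).
Qed.

(* A connected set has at most one exit: two exits j, j' would be at cyclic
   distance in [3, n-3], and the arc lemma would separate j from j'. *)
Lemma exit_at_unique S j j' : induces_connected (@g4_adj n) S ->
  exit_at S j -> exit_at S j' -> j = j'.
Proof.
move=> conn /and3P[jS j1S j2S] /and3P[j'S j'1S j'2S].
case: (eqVneq j j') => // /offset_neq0 e_ne0; exfalso.
have [off_j1 off_j2] := offset_window_self j.
have [off_j'1 off_j'2] := offset_window j j'.
have e_lt := offset_lt j j'.
set e := offset n j j' in e_ne0 e_lt off_j'1 off_j'2 *.
have := offset_separates j j'S j1S; have := offset_separates j j'S j2S.
have := offset_separates j jS j'1S; have := offset_separates j jS j'2S.
rewrite off_j1 off_j2 off_j'1 off_j'2 offset_id !modn_addn_small //; try lia.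
move=> ne2 ne1 ne_2 ne_1; have [e_ge3 e_le] : 3 <= e /\ e + 3 <= n.
  by move: ne2 ne1; do 2 case: ifP => ?; lia.
have := @between_gaps S j _ _ conn j1S j2S j'1S j'2S.
rewrite off_j1 off_j'1 modn_small; last lia.
move=> /(_ ltac:(lia) ltac:(lia) j j' jS j'S).
rewrite offset_id -/e; lia.
Qed.

Lemma entry_at_unique S j j' : induces_connected (@g4_adj n) S ->
  entry_at S j -> entry_at S j' -> j = j'.
Proof.
move=> conn /and3P[jS j1S j2S] /and3P[j'S j'1S j'2S].
case: (eqVneq j j') => // /offset_neq0 e_ne0; exfalso.
have [off_j1 off_j2] := offset_window_self j.
have [off_j'1 off_j'2] := offset_window j j'.
have e_lt := offset_lt j j'.
set e := offset n j j' in e_ne0 e_lt off_j'1 off_j'2 *.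
have := offset_separates j j2S j'S; have := offset_separates j j2S j'1S.
have := offset_separates j j'2S jS; have := offset_separates j j'2S j1S.
rewrite off_j1 off_j2 off_j'1 off_j'2 offset_id !modn_addn_small //; try lia.
move=> ne1 ne0 ne2 ne_2; have [e_ge3 e_le] : 3 <= e /\ e + 3 <= n.
  by move: ne1 ne0 ne2; do 2 case: ifP => ?; lia.
have := @between_gaps S j _ _ conn jS j1S j'S j'1S.
rewrite offset_id -/e => /(_ ltac:(lia) ltac:(lia) _ _ j2S j'2S).
rewrite off_j2 off_j'2 modn_small; lia.
Qed.

Definition boundary S j (exiting : bool) :=
  if exiting then exit_at S j else entry_at S j.

Lemma boundary_nonempty S j b : boundary S j b -> S != set0.
Proof.
by case: b => /and3P[jS _ j2S]; apply/set0Pn; [exists j | exists (succ (succ j))].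
Qed.

Lemma boundary_unique S j j' b : induces_connected (@g4_adj n) S ->
  boundary S j b -> boundary S j' b -> j = j'.
Proof. by case: b; [apply: exit_at_unique | apply: entry_at_unique]. Qed.

Definition pair_vec (a b : 'I_n) : {ffun 'I_n -> bool} :=
  [ffun v => (v == a) || (v == b)].

Lemma weight_pair a b : weight (pair_vec a b) <= 2.
Proof.
rewrite /weight (_ : [set v | pair_vec a b v] = [set a; b]).
  by rewrite cards2; case: (_ != _).
by apply/setP => v; rewrite !inE ffunE.
Qed.

Lemma outcome_pair m (A : 'M[bool]_(m, n)) k a b :
  outcome A (pair_vec a b) k = A k a || A k b.
Proof.
rewrite /outcome ffunE; apply/existsP/orP.
- by case=> v; rewrite ffunE => /andP[Av /orP[]/eqP <-]; [left | right].
- by case=> Ak; [exists a | exists b]; rewrite ffunE Ak eqxx ?orbT.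
Qed.

Lemma separating_row_boundary m (A : 'M[bool]_(m, n)) :
  (forall x y : {ffun 'I_n -> bool},
      weight x <= 2 -> weight y <= 2 -> x != y -> outcome A x != outcome A y) ->
  forall j, exists k b, boundary (row_support A k) j b.
Proof.
move=> sep j.
set x := pair_vec j (succ j); set y := pair_vec (succ j) (succ (succ j)).
have neq_xy : x != y.
  apply/eqP => /ffunP/(_ j); rewrite !ffunE eqxx /=.
  have [off_j1 off_j2] := offset_window_self j.
  move=> /esym/orP[] /eqP eq_j; have := congr1 (fun z : 'I_n => offset n j z) eq_j;
    by rewrite /= ?off_j1 ?off_j2 offset_id.
have := sep _ _ (weight_pair _ _) (weight_pair _ _) neq_xy.
case: (pickP (fun k => outcome A x k != outcome A y k)) => [k | same]; last first.
  by case/eqP; apply/ffunP => k; apply/eqP/negbFE/same.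
rewrite !outcome_pair => differ _; exists k.
rewrite /boundary /exit_at /entry_at /row_support !inE.
move: differ; case: (A k j); case: (A k (succ j)); case: (A k (succ (succ j))) => //= _;
  [by exists true | by exists false].
Qed.

End CirculantGraph.

Theorem proposition1 (n m : nat) (A : 'M[bool]_(m, n)) :
  5 <= n ->
  gt_matrix (@g4_adj n) A ->
  (forall x y : {ffun 'I_n -> bool},
      weight x <= 2 -> weight y <= 2 -> x != y -> outcome A x != outcome A y) ->
  n %/ 4 <= m.
Proof.
move=> n_ge5 gtA sep; have n_gt2 : 2 < n by lia.
pose R j (kb : 'I_m * bool) := boundary (row_support A kb.1) j kb.2.
have : #|'I_n| <= #|{: 'I_m * bool}|.
  apply: (@card_le_of_unique_witness _ _ R).
    by move=> j; have [k [b ?]] := separating_row_boundary n_gt2 sep j; exists (k, b).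
  move=> j j' [k b] Rj Rj'.
  exact: boundary_unique (gtA _ (boundary_nonempty Rj)) Rj Rj'.
rewrite card_ord card_prod card_ord card_bool; lia.
Qed.
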